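(* Consider scheduling a single task on $n=2$ machines without payments, in the model where machines are bound by their declarations (described in the context). Fix constants $L>2$ and $c>1$, and let $\mathcal A^{(2)}_{L,c}$ be the following randomized allocation rule. Given declarations, call the machine with the smaller declaration machine $1$ and the other machine $2$, so that $\hat t_1\le \hat t_2$. Then machine $1$ receives the task with probability $a_1$ and machine $2$ with probability $a_2=1-a_1$, where: (i) if $\hat t_1=\hat t_2$: $a_1=a_2=\tfrac12$; (ii) if $\hat t_1<\hat t_2<c\,\hat t_1$: $a_1=\tfrac1L$, $a_2=1-\tfrac1L$; (iii) if $c\,\hat t_1\le \hat t_2$: $a_1=1-\tfrac{1}{L}\tfrac{\hat t_1}{\hat t_2}$, $a_2=\tfrac1L\tfrac{\hat t_1}{\hat t_2}$. Then the pure Price of Anarchy of $\mathcal A^{(2)}_{L,c}$ is at most $1+\frac1L$.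
   Context: Model: there are $n$ machines and one task. Machine $i$ has a private true execution time $t_i\ge 0$ for the task and reports a declaration $\hat t_i\ge 0$. A (randomized) allocation rule maps the declaration vector $\hat{\mathbf t}$ to probabilities $a_i(\hat{\mathbf t})$ with $\sum_i a_i=1$; no payments are used. Machines are bound by their declarations: if machine $i$ gets the task she executes it for time $\max\{\hat t_i,t_i\}$. Hence the (expected) cost of machine $i$ is $C_i(\hat{\mathbf t})=a_i(\hat{\mathbf t})\max\{\hat t_i,t_i\}$, and the makespan (which for one task equals the expected execution time of the task) is $\mathcal M(\hat{\mathbf t})=\sum_i a_i(\hat{\mathbf t})\max\{\hat t_i,t_i\}$. A pure Nash equilibrium is a deterministic declaration vector $\hat{\mathbf t}$ such that for every machine $i$ and every alternative declaration $x\ge 0$, $C_i(\hat{\mathbf t})\le C_i(x,\hat{\mathbf t}_{-i})$. The pure Price of Anarchy of a rule is the supremum, over all true instances $\mathbf t$, of the ratio of the makespan of the worst pure Nash equilibrium to the optimal makespan $\min_i t_i$ (the best centralized allocation with respect to the true times). *)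

From Stdlib Require Import Reals Lra.
Open Scope R_scope.

(* Allocation rule A^(2)_{L,c}: probability that a machine declaring [x]
   receives the task when the other machine declares [y]. *)
Definition alloc (L c x y : R) : R :=
  if Req_EM_T x y then 1/2
  else if Rlt_dec x y then
    (* this machine is "machine 1" (smaller declaration) *)
    (if Rlt_dec y (c * x) then 1 / L else 1 - (1 / L) * (x / y))
  else
    (* this machine is "machine 2" (larger declaration), other is smaller *)
    (if Rlt_dec x (c * y) then 1 - 1 / L else (1 / L) * (y / x)).

Definition cost (L c t x y : R) : R := alloc L c x y * Rmax x t.

Definition makespan (L c t1 t2 d1 d2 : R) : R :=
  alloc L c d1 d2 * Rmax d1 t1 + alloc L c d2 d1 * Rmax d2 t2.

Definition pure_NE (L c t1 t2 d1 d2 : R) : Prop :=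
  0 <= d1 /\ 0 <= d2 /\
  (forall x, 0 <= x -> cost L c t1 d1 d2 <= cost L c t1 x d2) /\
  (forall x, 0 <= x -> cost L c t2 d2 d1 <= cost L c t2 x d1).

(** A machine that receives the
    task with probability at least 1/2 while its declaration is within a
    factor [c] of the other one can undercut the other declaration, still
    within factor [c], and drop to probability [1/L]: so in an equilibrium
    the declarations are either both [0] (and then both true times are [0])
    or a factor [c] apart.  In the latter case the faster declarer reports
    truthfully ([d1 = t1]), the slower one satisfies [t1 <= t2 <= d2], and the
    makespan is [t1 + (t1/L) (1 - t1/d2) <= (1 + 1/L) t1]. *)

From Stdlib Require Import Reals Lra Psatz.
Open Scope R_scope.

Definition best_response (L c t d y : R) : Prop :=
  forall x, 0 <= x -> cost L c t d y <= cost L c t x y.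

Section Allocation.

Variables L c : R.

Lemma alloc_diag x : alloc L c x x = 1/2.
Proof. unfold alloc; destruct (Req_EM_T x x); [reflexivity | congruence]. Qed.

Lemma alloc_lo_near x y : x < y -> y < c * x -> alloc L c x y = 1/L.
Proof.
  intros Hxy Hyx; unfold alloc.
  destruct (Req_EM_T x y); [lra |].
  destruct (Rlt_dec x y); [| lra].
  destruct (Rlt_dec y (c * x)); [reflexivity | lra].
Qed.

Lemma alloc_lo_far x y : x < y -> c * x <= y -> alloc L c x y = 1 - 1/L * (x/y).
Proof.
  intros Hxy Hyx; unfold alloc.
  destruct (Req_EM_T x y); [lra |].
  destruct (Rlt_dec x y); [| lra].
  destruct (Rlt_dec y (c * x)); [lra | reflexivity].
Qed.

Lemma alloc_hi_near x y : y < x -> x < c * y -> alloc L c x y = 1 - 1/L.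
Proof.
  intros Hyx Hxy; unfold alloc.
  destruct (Req_EM_T x y); [lra |].
  destruct (Rlt_dec x y); [lra |].
  destruct (Rlt_dec x (c * y)); [reflexivity | lra].
Qed.

Lemma alloc_hi_far x y : y < x -> c * y <= x -> alloc L c x y = 1/L * (y/x).
Proof.
  intros Hyx Hxy; unfold alloc.
  destruct (Req_EM_T x y); [lra |].
  destruct (Rlt_dec x y); [lra |].
  destruct (Rlt_dec x (c * y)); [lra | reflexivity].
Qed.

Lemma makespan_sym t1 t2 d1 d2 :
  makespan L c t1 t2 d1 d2 = makespan L c t2 t1 d2 d1.
Proof. unfold makespan; ring. Qed.

Lemma pure_NE_sym t1 t2 d1 d2 :
  pure_NE L c t1 t2 d1 d2 -> pure_NE L c t2 t1 d2 d1.
Proof. intros [? [? [? ?]]]; repeat split; assumption. Qed.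

End Allocation.

Section Equilibria.

Variables L c : R.
Hypothesis HL : 2 < L.
Hypothesis Hc : 1 < c.

Lemma inv_L_bounds : 0 < 1/L /\ 1/L < 1/2.
Proof.
  split.
  - apply Rdiv_lt_0_compat; lra.
  - unfold Rdiv; rewrite !Rmult_1_l; apply Rinv_lt_contravar; lra.
Qed.

Lemma undercut_exists b a : 0 < a -> b < a ->
  exists x, 0 < x /\ b <= x /\ x < a /\ a < c * x.
Proof.
  intros Ha Hba.
  set (m := a * (1 + /c) / 2).
  assert (Hinv : c * /c = 1) by (apply Rinv_r; lra).
  assert (0 < /c) by (apply Rinv_0_lt_compat; lra).
  assert (Hm : 0 < m /\ m < a /\ a < c * m).
  { unfold m; replace (c * (a * (1 + / c) / 2)) with ((a * c + a) / 2)
      by (field; lra).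
    repeat split; nra. }
  exists (Rmax b m).
  pose proof (Rmax_l b m); pose proof (Rmax_r b m).
  assert (Rmax b m < a) by (apply Rmax_lub_lt; lra).
  repeat split; nra.
Qed.

Lemma alloc_near_ge_half d y : y <= d -> d < c * y -> 1/2 <= alloc L c d y.
Proof.
  intros Hyd Hdy; destruct inv_L_bounds.
  destruct (Req_dec d y) as [-> | Hne].
  - rewrite alloc_diag; lra.
  - rewrite alloc_hi_near by lra; lra.
Qed.

Lemma alloc_lo_far_gt d x y : 0 <= d -> d < x -> x < y -> c * d <= y ->
  alloc L c x y < alloc L c d y.
Proof.
  intros Hd Hdx Hxy Hfar; destruct inv_L_bounds.
  assert (Hq : 0 < /y) by (apply Rinv_0_lt_compat; lra).
  assert (Hdq : d * /y < x * /y) by nra.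
  assert (Hxq : x * /y < 1) by (rewrite <- (Rinv_r y) by lra; nra).
  rewrite (alloc_lo_far L c d y) by lra; unfold Rdiv.
  destruct (Rlt_le_dec y (c * x)) as [Hnear | Hfar'].
  - rewrite alloc_lo_near by lra; nra.
  - rewrite alloc_lo_far by lra; unfold Rdiv; nra.
Qed.

(* Any declaration [d >= y > 0] within factor [c] gets probability [>= 1/2];
   undercutting [y] slightly still lands within factor [c] and gets [1/L]. *)
Lemma near_not_best_response t d y : 0 < y -> y <= d -> d < c * y ->
  ~ best_response L c t d y.
Proof.
  intros Hy Hyd Hdy BR; destruct inv_L_bounds.
  destruct (undercut_exists 0 y Hy Hy) as [x [Hx0 [_ [Hxy Hyx]]]].
  specialize (BR x (Rlt_le _ _ Hx0)); unfold cost in BR.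
  rewrite (alloc_lo_near L c x y) in BR by assumption.
  pose proof (alloc_near_ge_half d y Hyd Hdy).
  assert (Rmax x t <= Rmax d t) by (apply Rle_max_compat_r; lra).
  pose proof (Rmax_l d t).
  nra.
Qed.

Lemma diag_zero_best_response t : 0 <= t -> best_response L c t 0 0 -> t = 0.
Proof.
  intros Ht BR; specialize (BR 1 Rle_0_1); unfold cost in BR.
  rewrite alloc_diag, alloc_hi_far in BR by lra.
  rewrite Rmax_right in BR by lra.
  unfold Rdiv in BR; rewrite Rmult_0_l, Rmult_0_r, Rmult_0_l in BR.
  lra.
Qed.

(* Lowering [d] towards [t] helps because [x (1 - x/(L y))] increases for
   [x < L y / 2], and [y > d]. *)
Lemma far_lo_best_response_le t d y : 0 <= t -> d < y -> c * d <= y ->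
  best_response L c t d y -> d <= t.
Proof.
  intros Ht Hdy Hfar BR.
  destruct (Rle_lt_dec d t) as [| Htd]; [assumption | exfalso].
  destruct inv_L_bounds.
  set (x := (t + d) / 2).
  assert (Hx : t < x /\ x < d) by (unfold x; lra).
  specialize (BR x ltac:(lra)); unfold cost in BR.
  rewrite !Rmax_left in BR by lra.
  rewrite (alloc_lo_far L c d y), (alloc_lo_far L c x y) in BR by nra.
  unfold Rdiv in BR.
  assert (Hq : 0 < /y) by (apply Rinv_0_lt_compat; lra).
  assert (Hs : (d + x) * /y < 2).
  { apply (Rmult_lt_reg_r y); [lra |].
    rewrite Rmult_assoc, Rinv_l by lra; lra. }
  assert (0 < (d - x) * (1 - 1/L * ((d + x) * /y))).
  { apply Rmult_lt_0_compat; nra. }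
  nra.
Qed.

Lemma far_lo_best_response_ge t d y : 0 <= d -> d < y -> c * d <= y ->
  best_response L c t d y -> t <= d.
Proof.
  intros Hd Hdy Hfar BR.
  destruct (Rle_lt_dec t d) as [| Hdt]; [assumption | exfalso].
  set (x := (d + Rmin t y) / 2).
  assert (d < Rmin t y) by (apply Rmin_glb_lt; lra).
  pose proof (Rmin_l t y); pose proof (Rmin_r t y).
  assert (Hx : d < x /\ x < t /\ x < y) by (unfold x; lra).
  specialize (BR x ltac:(lra)); unfold cost in BR.
  rewrite !Rmax_right in BR by lra.
  pose proof (alloc_lo_far_gt d x y Hd ltac:(lra) ltac:(lra) Hfar).
  nra.
Qed.

Lemma far_hi_best_response_le t d y : 0 < y -> y < d -> c * y <= d ->
  best_response L c t d y -> t <= d.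
Proof.
  intros Hy Hyd Hfar BR.
  destruct (Rle_lt_dec t d) as [| Hdt]; [assumption | exfalso].
  destruct inv_L_bounds.
  specialize (BR t ltac:(lra)); unfold cost in BR.
  rewrite Rmax_right, Rmax_left in BR by lra.
  rewrite (alloc_hi_far L c d y), (alloc_hi_far L c t y) in BR by lra.
  replace (1 / L * (y / t) * t) with (y / L) in BR by (field; lra).
  replace (1 / L * (y / d) * t) with (y / L + y / L * ((t - d) / d)) in BR
    by (field; lra).
  assert (0 < y / L * ((t - d) / d)).
  { apply Rmult_lt_0_compat; apply Rdiv_lt_0_compat; lra. }
  lra.
Qed.

Lemma far_hi_best_response_ge t d y : 0 < y -> y < d -> c * y <= d -> t <= d ->
  best_response L c t d y -> y <= t.
Proof.
  intros Hy Hyd Hfar Htd BR.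
  destruct (Rle_lt_dec y t) as [| Hty]; [assumption | exfalso].
  destruct inv_L_bounds.
  destruct (undercut_exists t y Hy Hty) as [x [Hx0 [Htx [Hxy Hyx]]]].
  specialize (BR x ltac:(lra)); unfold cost in BR.
  rewrite (alloc_hi_far L c d y), alloc_lo_near in BR by assumption.
  rewrite !Rmax_left in BR by lra.
  replace (1 / L * (y / d) * d) with (1 / L * y) in BR by (field; lra).
  nra.
Qed.

Lemma makespan_far_bound t1 t2 d2 : 0 <= t1 -> t1 < d2 -> c * t1 <= d2 ->
  t1 <= t2 -> t2 <= d2 ->
  makespan L c t1 t2 t1 d2 <= (1 + 1/L) * Rmin t1 t2.
Proof.
  intros Ht1 Hlt Hfar H12 H2d; destruct inv_L_bounds.
  unfold makespan.
  rewrite (alloc_lo_far L c t1 d2), (alloc_hi_far L c d2 t1) by assumption.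
  rewrite Rmax_left, Rmax_left, Rmin_left by lra.
  replace (1 / L * (t1 / d2) * d2) with (1 / L * t1) by (field; lra).
  assert (0 <= 1 / L * (t1 / d2) * t1).
  { apply Rmult_le_pos; [apply Rmult_le_pos |]; [lra | | lra].
    apply Rle_mult_inv_pos; lra. }
  nra.
Qed.

Lemma makespan_diag_bound t1 t2 d : 0 <= t1 -> 0 <= t2 ->
  pure_NE L c t1 t2 d d -> makespan L c t1 t2 d d <= (1 + 1/L) * Rmin t1 t2.
Proof.
  intros Ht1 Ht2 [Hd [_ [BR1 BR2]]].
  destruct (Req_dec d 0) as [-> | Hd0].
  - rewrite (diag_zero_best_response t1 Ht1 BR1),
      (diag_zero_best_response t2 Ht2 BR2).
    unfold makespan; rewrite Rmax_left, Rmin_left by lra; lra.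
  - assert (0 < d) by (destruct Hd; [assumption | congruence]).
    exfalso; apply (near_not_best_response t1 d d); [nra | nra | nra | exact BR1].
Qed.

Lemma makespan_lt_bound t1 t2 d1 d2 : 0 <= t1 -> 0 <= t2 ->
  pure_NE L c t1 t2 d1 d2 -> d1 < d2 ->
  makespan L c t1 t2 d1 d2 <= (1 + 1/L) * Rmin t1 t2.
Proof.
  intros Ht1 Ht2 [Hd1 [Hd2 [BR1 BR2]]] Hlt.
  destruct (Rlt_le_dec d2 (c * d1)) as [Hnear | Hfar].
  { exfalso; apply (near_not_best_response t2 d2 d1); [nra | nra | nra | exact BR2]. }
  assert (d1 = t1) as ->.
  { apply Rle_antisym.
    - exact (far_lo_best_response_le t1 d1 d2 Ht1 Hlt Hfar BR1).
    - exact (far_lo_best_response_ge t1 d1 d2 Hd1 Hlt Hfar BR1). }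
  destruct (Req_dec t1 0) as [-> | Ht1p].
  - unfold makespan.
    rewrite (alloc_lo_far L c 0 d2), (alloc_hi_far L c d2 0) by assumption.
    rewrite Rmin_left, Rmax_left by lra.
    unfold Rdiv; rewrite Rmult_0_l, !Rmult_0_r; lra.
  - assert (H2d : t2 <= d2) by
      exact (far_hi_best_response_le t2 d2 t1 ltac:(lra) Hlt Hfar BR2).
    pose proof (far_hi_best_response_ge t2 d2 t1 ltac:(lra) Hlt Hfar H2d BR2).
    apply makespan_far_bound; assumption.
Qed.

End Equilibria.

Theorem theorem1 (L c : R) (HL : 2 < L) (Hc : 1 < c) :
  forall t1 t2 d1 d2 : R, 0 <= t1 -> 0 <= t2 ->
    pure_NE L c t1 t2 d1 d2 ->
    makespan L c t1 t2 d1 d2 <= (1 + 1 / L) * Rmin t1 t2.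
Proof.
  intros t1 t2 d1 d2 Ht1 Ht2 NE.
  destruct (Rtotal_order d1 d2) as [Hlt | [-> | Hgt]].
  - exact (makespan_lt_bound L c HL Hc t1 t2 d1 d2 Ht1 Ht2 NE Hlt).
  - exact (makespan_diag_bound L c HL Hc t1 t2 d2 Ht1 Ht2 NE).
  - rewrite makespan_sym, Rmin_comm.
    apply (makespan_lt_bound L c HL Hc t2 t1 d2 d1 Ht2 Ht1); [| exact Hgt].
    exact (pure_NE_sym L c t1 t2 d1 d2 NE).
Qed.
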